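(* Let $\Phi_M,\Phi_N$ be measurement channels corresponding to two $2$-outcome qubit POVMs ($d=2$) $M=\{M_0,M_1\}$ and $N=\{N_0,N_1\}$ with $M_1\neq N_1$. The pair $\Phi_M,\Phi_N$ is a Maximal Entanglement Worst Case pair if and only if $\det(M_0-N_0)=0$.
   Context: The measurement channel of a POVM $M$ is $\Phi_M(\rho)=\sum_i\operatorname{Tr}(\rho M_i)\,|i\rangle\langle i|$. With $\Delta_\Phi=\Phi_M-\Phi_N$, Choi operator $J(\mathcal{S})=\sum_{ij}\mathcal{S}(|i\rangle\langle j|)\otimes|i\rangle\langle j|$, ME-norm $\|\mathcal{S}\|_{\mathrm{ME}}=\|J(\mathcal{S})/d\|_1$ and diamond norm $\|\mathcal{S}\|_\diamond=\max_{\rho_{AA'}}\|(\mathcal{S}\otimes I_{A'})\rho_{AA'}\|_1$, the pair is called Maximal Entanglement Worst Case (MEWC) if $\|\Delta_\Phi\|_\diamond=d\|\Delta_\Phi\|_{\mathrm{ME}}$, i.e. a maximally entangled input is maximally suboptimal for discriminating the two channels with uniform priors. *)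

From HB Require Import structures.
From mathcomp Require Import all_boot all_order all_algebra.
From mathcomp Require Import sesquilinear spectral.
From mathcomp Require Import mxtens.

Set Implicit Arguments.
Unset Strict Implicit.
Unset Printing Implicit Defensive.

Import Order.TTheory GRing.Theory Num.Theory.
Local Open Scope ring_scope.

(* Complex scalars: an arbitrary numClosedFieldType C (e.g. algC, or R[i]
   for a real closed field R).  Matrices over C, conjugate transpose A ^t*. *)

Section QInfo.
Variable C : numClosedFieldType.

Definition adjmx m n (A : 'M[C]_(m, n)) : 'M[C]_(n, m) := map_mx Num.conj A^T.

Definition psd n (A : 'M[C]_n) : Prop :=
  forall v : 'cV[C]_n, 0 <= (adjmx v *m A *m v) 0 0.

Definition density n (rho : 'M[C]_n) : Prop := psd rho /\ \tr rho = 1.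

Definition POVM d k (M : 'I_k -> 'M[C]_d) : Prop :=
  (forall i, psd (M i)) /\ \sum_(i < k) M i = 1%:M.

(* trace norm ||X||_1 = Tr sqrt(X^* X); the square root of the psd matrix
   X^* X is taken through its spectral decomposition (sqrt of eigenvalues) *)
Definition trnorm m n (X : 'M[C]_(m, n)) : C :=
  \sum_(i < n) sqrtC (spectral_diag (adjmx X *m X) 0 i).

Definition meas_channel d k (M : 'I_k -> 'M[C]_d) (rho : 'M[C]_d) : 'M[C]_k :=
  \sum_(i < k) (\tr (rho *m M i)) *: delta_mx i i.

Definition map_diff d k (S T : 'M[C]_d -> 'M[C]_k) : 'M[C]_d -> 'M[C]_k :=
  fun rho => S rho - T rho.

Definition choi d k (S : 'M[C]_d -> 'M[C]_k) : 'M[C]_(k * d) :=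
  \sum_(i < d) \sum_(j < d) (S (delta_mx i j) *t delta_mx i j).

Definition ME_norm d k (S : 'M[C]_d -> 'M[C]_k) : C :=
  trnorm ((d%:R)^-1 *: choi S).

(* (S (x) I_{A'}) rho  for rho on C^d (x) C^n  (tensor index via mxtens_index) *)
Definition ext_apply d k n (S : 'M[C]_d -> 'M[C]_k) (rho : 'M[C]_(d * n))
  : 'M[C]_(k * n) :=
  \sum_(i < d) \sum_(j < d) \sum_(a < n) \sum_(b < n)
     rho (mxtens_index (i, a)) (mxtens_index (j, b))
       *: (S (delta_mx i j) *t delta_mx a b).

Definition is_diamond_norm d k (S : 'M[C]_d -> 'M[C]_k) (t : C) : Prop :=
  (forall n (rho : 'M[C]_(d * n)), density rho -> trnorm (ext_apply S rho) <= t)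
  /\ (exists n (rho : 'M[C]_(d * n)), density rho /\ trnorm (ext_apply S rho) = t).

Definition MEWC d k (M N : 'I_k -> 'M[C]_d) : Prop :=
  let Delta := map_diff (meas_channel M) (meas_channel N) in
  is_diamond_norm Delta (d%:R * ME_norm Delta).

End QInfo.

From HB Require Import structures.
From mathcomp Require Import all_boot all_order all_algebra.
From mathcomp Require Import sesquilinear spectral mxtens ring.

(* The difference of the two channels only sees D = M_0 - N_0: since
   M_1 = 1 - M_0 and N_1 = 1 - N_0, Delta(X) = Tr(X D) Z with Z = diag(1, -1).
   Hence (Delta ⊗ I)(rho) = Z ⊗ X_rho with X_rho = Tr_A((D ⊗ 1) rho), and the
   Choi operator is Z ⊗ D^T.  Diagonalising D = sum_k lam_k w_k w_k^*, X_rho is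
   the combination sum_k lam_k X_k of positive matrices with sum_k Tr X_k = 1,
   so ||X_rho||_1 <= max_k |lam_k|, with equality for the product state
   w_k w_k^*.  Thus ||Delta||_diamond = 2 max_k |lam_k| while
   d ||Delta||_ME = ||Z ⊗ D^T||_1 = 2 sum_k |lam_k|, in any dimension d.  For
   d = 2 these agree iff an eigenvalue vanishes, i.e. iff det D = 0. *)

Import Order.TTheory GRing.Theory Num.Theory.
Local Open Scope ring_scope.
Local Open Scope sesquilinear_scope.

Set Implicit Arguments.
Unset Strict Implicit.

Section MeasurementChannels.
Variable C : numClosedFieldType.
Implicit Types m n : nat.

Lemma big_ord2 (R : Type) (idx : R) (op : Monoid.law idx) (F : 'I_2 -> R) :
  \big[op/idx]_(i < 2) F i = op (F 0) (F 1).
Proof. by rewrite big_ord_recl big_ord1; congr (op _ (F _)); apply: val_inj. Qed.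

Lemma ord2_cases (j : 'I_2) : j = 0 \/ j = 1.
Proof. by case: j => [[|[|//]] ?]; [left | right]; apply: val_inj. Qed.

Lemma ord2_max_norm (x : 'I_2 -> C) : exists k, forall j, `|x j| <= `|x k|.
Proof.
have /orP[le01 | le10] := real_leVge (normr_real (x 0)) (normr_real (x 1)).
  by exists 1 => j; case: (ord2_cases j) => ->.
by exists 0 => j; case: (ord2_cases j) => ->.
Qed.

Lemma add_norm_eq_max (x y : C) : `|y| <= `|x| -> (`|x| + `|y| = `|x| <-> x * y = 0).
Proof.
move=> le_yx; rewrite -{2}[`|x|]addr0; split=> [/addrI/eqP | /eqP].
  by rewrite normr_eq0 => /eqP ->; rewrite mulr0.
rewrite mulf_eq0 => /orP[/eqP x0 | /eqP ->]; last by rewrite normr0.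
by move: le_yx; rewrite x0 normr0 normr_le0 => /eqP ->; rewrite normr0.
Qed.

Lemma ord2_norm_sum_eq_max (x : 'I_2 -> C) k : (forall j, `|x j| <= `|x k|) ->
  `|x 0| + `|x 1| = `|x k| <-> x 0 * x 1 = 0.
Proof.
case: (ord2_cases k) => -> le_xk; first exact: add_norm_eq_max.
by rewrite addrC mulrC; apply: add_norm_eq_max.
Qed.

Lemma sum_mul_delta n (F : 'I_n -> C) a : \sum_b F b * (b == a)%:R = F a.
Proof.
rewrite (bigD1 a) //= eqxx mulr1 big1 ?addr0 // => b /negbTE ->.
by rewrite mulr0.
Qed.

Lemma sum_mul_delta2 n (F : 'I_n -> 'I_n -> C) a b :
  \sum_a' \sum_b' F a' b' * ((a == a') && (b == b'))%:R = F a b.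
Proof.
transitivity (\sum_a' (\sum_b' F a' b' * (b' == b)%:R) * (a' == a)%:R).
  apply: eq_bigr => a' _; rewrite mulr_suml; apply: eq_bigr => b' _.
  by rewrite -mulrA -natrM mulnb andbC (eq_sym a) (eq_sym b).
by under eq_bigr do rewrite sum_mul_delta; rewrite sum_mul_delta.
Qed.

Lemma sum_mxtens_index m n (F : 'I_(m * n) -> C) :
  \sum_p F p = \sum_i \sum_j F (mxtens_index (i, j)).
Proof.
rewrite pair_big (reindex (@mxtens_index m n)) /=; last first.
  by exists (@mxtens_unindex m n) => x _; rewrite (mxtens_indexK, mxtens_unindexK).
by apply: eq_bigr => -[i j].
Qed.

Lemma mxtrace_delta_mul n (A : 'M[C]_n) i j : \tr (delta_mx i j *m A) = A j i.
Proof.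
rewrite -(mul_delta_mx (0 : 'I_1)) -mulmxA mxtrace_mulC /mxtrace big_ord1.
by rewrite -rowE -colE !mxE.
Qed.

(** * Adjoints and positive semidefinite matrices *)

Lemma adjmxE m n (A : 'M[C]_(m, n)) : adjmx A = A^t*.
Proof. by []. Qed.

Lemma adjmxD m n (A B : 'M[C]_(m, n)) : (A + B)^t* = A^t* + B^t*.
Proof. by rewrite linearD /= map_mxD. Qed.

Lemma adjmxZ m n c (A : 'M[C]_(m, n)) : (c *: A)^t* = c^* *: A^t*.
Proof. by apply/matrixP => i j; rewrite !mxE rmorphM. Qed.

Lemma adjmxM m n p (A : 'M[C]_(m, n)) (B : 'M[C]_(n, p)) : (A *m B)^t* = B^t* *m A^t*.
Proof. by rewrite trmx_mul map_mxM. Qed.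

Lemma adj_diag_mx n (y : 'rV[C]_n) : (diag_mx y)^t* = diag_mx (map_mx Num.conj y).
Proof. by rewrite tr_diag_mx map_diag_mx. Qed.

Lemma adjmx_tens m n p q (A : 'M[C]_(m, n)) (B : 'M[C]_(p, q)) :
  (A *t B)^t* = A^t* *t B^t*.
Proof. by rewrite trmx_tens map_mxT. Qed.

Lemma hermsymmxP n (A : 'M[C]_n) :
  reflect (forall i j, A i j = (A j i)^*) (A \is hermsymmx).
Proof.
rewrite is_hermitianmxE expr0 scale1r.
apply: (iffP eqP) => [{1}-> i j | hA]; first by rewrite !mxE.
by apply/matrixP => i j; rewrite !mxE hA.
Qed.

Lemma trmx_hermsym n (A : 'M[C]_n) : A \is hermsymmx -> A^T \is hermsymmx.
Proof. by move=> /hermsymmxP hA; apply/hermsymmxP => i j; rewrite !mxE hA. Qed.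

Lemma tens_hermsym m n (A : 'M[C]_m) (B : 'M[C]_n) :
  A \is hermsymmx -> B \is hermsymmx -> A *t B \is hermsymmx.
Proof.
move=> /hermsymmxP hA /hermsymmxP hB; apply/hermsymmxP => p q.
case: (mxtens_indexP p) => i j; case: (mxtens_indexP q) => k l.
by rewrite !tensmxE hA hB rmorphM.
Qed.

Lemma quad_form_delta n (A : 'M[C]_n) i j :
  ((delta_mx i 0 : 'cV[C]_n)^t* *m A *m (delta_mx j 0 : 'cV[C]_n)) 0 0 = A i j.
Proof.
have -> : (delta_mx i 0 : 'cV[C]_n)^t* = delta_mx 0 i.
  by apply/matrixP => a b; rewrite !mxE conjC_nat andbC.
by rewrite -rowE -colE !mxE.
Qed.

Lemma quad_formDZ n (B : 'M[C]_n) (u w : 'cV[C]_n) c :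
  (u + c *: w)^t* *m B *m (u + c *: w) =
  u^t* *m B *m u + c *: (u^t* *m B *m w) + c^* *: (w^t* *m B *m u)
    + (c^* * c) *: (w^t* *m B *m w).
Proof.
rewrite adjmxD adjmxZ !mulmxDl !mulmxDr -!scalemxAl -!scalemxAr scalerA.
by rewrite !addrA [_ + c *: _ + _]addrAC [c^* * c]mulrC.
Qed.

Lemma quad_form_eq0 n (B : 'M[C]_n) :
  (forall v : 'cV[C]_n, (v^t* *m B *m v) 0 0 = 0) -> B = 0.
Proof.
move=> hB; apply/matrixP => i j; rewrite mxE.
pose e k : 'cV[C]_n := delta_mx k 0.
have hdiag k : B k k = 0 by rewrite -quad_form_delta hB.
(* Polarization: evaluate the form at e_i + c e_j for c = 1 and c = 'i. *)
have hq c : c * B i j + c^* * B j i = 0.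
  have := hB (e i + c *: e j); rewrite quad_formDZ ![fun_of_matrix (_ + _) 0 0]mxE.
  by rewrite ![fun_of_matrix (_ *: _) 0 0]mxE !quad_form_delta !hdiag mulr0 addr0 add0r.
have := hq 1; have := hq 'i; rewrite conjC1 conjCi !mul1r mulNr => hi h1.
have : 2%:R * 'i * B i j = 0.
  transitivity ('i * (B i j + B j i) + ('i * B i j - 'i * B j i)); first by ring.
  by rewrite h1 hi mulr0 addr0.
by move/eqP; rewrite !mulf_eq0 pnatr_eq0 (negbTE (neq0Ci _)) => /eqP.
Qed.

Lemma psd_hermsym n (A : 'M[C]_n) : psd A -> A \is hermsymmx.
Proof.
move=> hA; rewrite is_hermitianmxE expr0 scale1r; apply/eqP/subr0_eq.
apply: quad_form_eq0 => v.
rewrite mulmxBr mulmxBl.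
have -> : v^t* *m A^t* *m v = (v^t* *m A *m v)^t* by rewrite !adjmxM trmxCK mulmxA.
have : 0 <= (v^t* *m A *m v) 0 0 := hA v.
move: (v^t* *m A *m v) => q q_ge0.
by rewrite !mxE conj_Creal ?subrr ?ger0_real.
Qed.

Lemma psd_adj_conj m n (V : 'M[C]_(m, n)) (A : 'M[C]_m) :
  psd A -> psd (V^t* *m A *m V).
Proof. by move=> hA v; have := hA (V *m v); rewrite !adjmxE adjmxM !mulmxA. Qed.

Lemma psd_rank1 n (u : 'cV[C]_n) : psd (u *m u^t*).
Proof.
move=> v; rewrite adjmxE.
have -> : v^t* *m (u *m u^t*) *m v = (v^t* *m u) *m (v^t* *m u)^t*.
  by rewrite adjmxM trmxCK !mulmxA.
move: (v^t* *m u) => w; rewrite mxE big_ord1 !mxE; exact: mul_conjC_ge0.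
Qed.

Lemma psd_diag_ge0 n (A : 'M[C]_n) i : psd A -> 0 <= A i i.
Proof. by move=> hA; rewrite -quad_form_delta; apply: hA. Qed.

Lemma psd_mxtrace_ge0 n (A : 'M[C]_n) : psd A -> 0 <= \tr A.
Proof. by move=> hA; apply: sumr_ge0 => i _; apply: psd_diag_ge0. Qed.

(** * The trace norm *)

Lemma char_poly_conj_diag n (Q' Q : 'M[C]_n) (e : 'rV[C]_n) : Q' *m Q = 1%:M ->
  char_poly (Q' *m diag_mx e *m Q) = \prod_i ('X - (e 0 i)%:P).
Proof.
move=> QQ'; rewrite /char_poly.
have -> : char_poly_mx (Q' *m diag_mx e *m Q) =
    map_mx polyC Q' *m char_poly_mx (diag_mx e) *m map_mx polyC Q.
  rewrite /char_poly_mx mulmxBr mulmxBl !map_mxM; congr (_ - _).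
  by rewrite scalar_mxC -mulmxA -map_mxM QQ' map_mx1 mulmx1.
rewrite !det_mulmx mulrAC -det_mulmx -map_mxM QQ' map_mx1 det1 mul1r.
rewrite -/(char_poly _) char_poly_trig ?diag_mx_is_trig //.
by apply: eq_bigr => i _; rewrite mxE eqxx mulr1n.
Qed.

(* spectral_diag A is an arbitrary diagonalisation: only the multiset of its
   entries, the roots of char_poly A, is determined by A. *)
Lemma sum_spectral_diag n (A Q' Q : 'M[C]_n) (e : 'rV[C]_n) (f : C -> C) :
  A \is normalmx -> Q' *m Q = 1%:M -> A = Q' *m diag_mx e *m Q ->
  \sum_i f (spectral_diag A 0 i) = \sum_i f (e 0 i).
Proof.
move=> /orthomx_spectralP hA QQ' hAe.
have hP : invmx (spectralmx A) *m spectralmx A = 1%:M by rewrite mulVmx ?spectral_unit.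
have := char_poly_conj_diag (spectral_diag A) hP.
rewrite -hA {1}hAe char_poly_conj_diag // => eq_char.
rewrite -(big_map (fun i => spectral_diag A 0 i) xpredT f).
rewrite -(big_map (fun i => e 0 i) xpredT f).
by apply/esym/perm_big/prod_XsubC_eq; rewrite !big_map eq_char.
Qed.

Lemma unitary_diag_normal n (P : 'M[C]_n) (y : 'rV[C]_n) :
  P \is unitarymx -> P^t* *m diag_mx y *m P \is normalmx.
Proof.
by move=> hP; apply/orthomx_spectral_subproof; exists (P, y); rewrite //= invmx_unitary.
Qed.

Lemma normal_unitary_diag n (A : 'M[C]_n) : A \is normalmx ->
  exists P (y : 'rV[C]_n), P \is unitarymx /\ A = P^t* *m diag_mx y *m P.
Proof.
move=> /orthomx_spectralP hA; exists (spectralmx A), (spectral_diag A).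
by rewrite spectral_unitarymx -invmx_unitary ?spectral_unitarymx.
Qed.

Lemma trnorm_unitary_diag n (P : 'M[C]_n) (y : 'rV[C]_n) : P \is unitarymx ->
  trnorm (P^t* *m diag_mx y *m P) = \sum_i `|y 0 i|.
Proof.
move=> hP; have PPt : P *m P^t* = 1%:M by apply/unitarymxP.
have PtP : P^t* *m P = 1%:M by apply: mulmx1C.
pose z := \row_i (y 0 i * (y 0 i)^*).
have AtA : adjmx (P^t* *m diag_mx y *m P) *m (P^t* *m diag_mx y *m P) =
    P^t* *m diag_mx z *m P.
  rewrite adjmxE !adjmxM trmxCK adj_diag_mx -!mulmxA; congr (_ *m _).
  rewrite !mulmxA -[_ *m P *m P^t*]mulmxA PPt mulmx1 mulmx_diag.
  by congr (diag_mx _ *m _); apply/rowP => i; rewrite !mxE mulrC.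
rewrite /trnorm AtA (sum_spectral_diag _ (unitary_diag_normal _ hP) PtP erefl).
by apply: eq_bigr => i _; rewrite mxE normC_def.
Qed.

Lemma unitarymx1 n : (1%:M : 'M[C]_n) \is unitarymx.
Proof. by apply/unitarymxP; rewrite trmx1 map_mx1 mulmx1. Qed.

Lemma trnorm_diag n (y : 'rV[C]_n) : trnorm (diag_mx y) = \sum_i `|y 0 i|.
Proof.
by rewrite -(trnorm_unitary_diag y (unitarymx1 n)) trmx1 map_mx1 mul1mx mulmx1.
Qed.

Lemma trnorm_mx11 (A : 'M[C]_1) : trnorm A = `|A 0 0|.
Proof.
rewrite {1}(_ : A = diag_mx A) ?trnorm_diag ?big_ord1 //.
by apply/matrixP => i j; rewrite (ord1 i) (ord1 j) mxE mulr1n.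
Qed.

Lemma trnormZ n c (A : 'M[C]_n) : A \is normalmx -> trnorm (c *: A) = `|c| * trnorm A.
Proof.
move=> /normal_unitary_diag[P [y [hP ->]]].
rewrite scalemxAl scalemxAr -linearZ /= !trnorm_unitary_diag // mulr_sumr.
by apply: eq_bigr => i _; rewrite mxE normrM.
Qed.

Lemma trnorm_tr n (A : 'M[C]_n) : A \is normalmx -> trnorm A^T = trnorm A.
Proof.
move=> /normal_unitary_diag[P [y [hP ->]]].
have hP' : map_mx Num.conj P \is unitarymx by rewrite conjC_unitary.
rewrite [RHS]trnorm_unitary_diag // -(trnorm_unitary_diag y hP').
congr trnorm; rewrite !trmx_mul tr_diag_mx mulmxA; congr (_ *m _ *m _).
  by apply/matrixP => i j; rewrite !mxE conjCK.
by apply/matrixP => i j; rewrite !mxE.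
Qed.

Lemma tensmx11 m n : (1%:M : 'M[C]_m) *t (1%:M : 'M[C]_n) = 1%:M.
Proof.
apply/matrixP => p q.
case: (mxtens_indexP p) => i j; case: (mxtens_indexP q) => k l.
rewrite tensmxE !mxE (can_eq (@mxtens_indexK m n)) xpair_eqE.
by case: (i == k); case: (j == l); rewrite ?mulr1 ?mulr0.
Qed.

Lemma tens_unitarymx m n (P : 'M[C]_m) (Q : 'M[C]_n) :
  P \is unitarymx -> Q \is unitarymx -> P *t Q \is unitarymx.
Proof.
move=> /unitarymxP hP /unitarymxP hQ.
by apply/unitarymxP; rewrite adjmx_tens tensmx_mul hP hQ tensmx11.
Qed.

Lemma tens_diag_mx m n (a : 'rV[C]_m) (b : 'rV[C]_n) :
  diag_mx a *t diag_mx b =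
  diag_mx (\row_p (a 0 (mxtens_unindex p).1 * b 0 (mxtens_unindex p).2)).
Proof.
apply/matrixP => p q.
case: (mxtens_indexP p) => i j; case: (mxtens_indexP q) => k l.
rewrite tensmxE !mxE (can_eq (@mxtens_indexK m n)) xpair_eqE !mxtens_indexK /=.
by case: (i == k); case: (j == l); rewrite ?mulr1n ?mulr0n ?mulr0 ?mul0r.
Qed.

Lemma trnorm_tens m n (A : 'M[C]_m) (B : 'M[C]_n) :
  A \is normalmx -> B \is normalmx -> trnorm (A *t B) = trnorm A * trnorm B.
Proof.
move=> /normal_unitary_diag[P [a [hP ->]]] /normal_unitary_diag[Q [b [hQ ->]]].
have -> : (P^t* *m diag_mx a *m P) *t (Q^t* *m diag_mx b *m Q) =
    (P *t Q)^t* *m (diag_mx a *t diag_mx b) *m (P *t Q).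
  by rewrite adjmx_tens !tensmx_mul.
rewrite tens_diag_mx !trnorm_unitary_diag ?tens_unitarymx // mulr_sum.
by apply: eq_bigr => p _; rewrite mxE normrM.
Qed.

Lemma trnorm_le_psd_comb n K (X : 'M[C]_n) (lam : 'I_K -> C) (Xs : 'I_K -> 'M[C]_n) :
  X \is normalmx -> X = \sum_k lam k *: Xs k -> (forall k, psd (Xs k)) ->
  trnorm X <= \sum_k `|lam k| * \tr (Xs k).
Proof.
move=> /normal_unitary_diag[P [y [hP eqX]]] eqXs psdXs.
have PPt : P *m P^t* = 1%:M by apply/unitarymxP.
pose c k i := (P *m Xs k *m P^t*) i i.
have c_ge0 k i : 0 <= c k i.
  by apply: psd_diag_ge0; rewrite -{1}[P]trmxCK; apply: psd_adj_conj.
have sum_c k : \sum_i c k i = \tr (Xs k).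
  by rewrite -/(mxtrace _) mxtrace_mulC mulmxA (mulmx1C PPt) mul1mx.
have y_c i : y 0 i = \sum_k lam k * c k i.
  have : P *m X *m P^t* = diag_mx y.
    by rewrite eqX !mulmxA PPt mul1mx -mulmxA PPt mulmx1.
  rewrite eqXs mulmx_sumr mulmx_suml => /matrixP/(_ i i).
  rewrite summxE !mxE eqxx mulr1n => <-; apply: eq_bigr => k _.
  by rewrite -scalemxAr -scalemxAl mxE.
have -> : \sum_k `|lam k| * \tr (Xs k) = \sum_i \sum_k `|lam k| * c k i.
  by rewrite exchange_big; apply: eq_bigr => k _; rewrite -mulr_sumr sum_c.
rewrite eqX trnorm_unitary_diag //; apply: ler_sum => i _.
rewrite y_c; apply: le_trans (ler_norm_sum _ _ _) _; apply: ler_sum => k _.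
by rewrite normrM (ger0_norm (c_ge0 k i)).
Qed.

(** * A partial trace *)

(* Tr_A((D ⊗ 1) rho), the first factor of 'M_(d * n) being the system A. *)
Definition ptrace_mul d n (D : 'M[C]_d) (rho : 'M[C]_(d * n)) : 'M[C]_n :=
  \matrix_(a, b) \sum_i \sum_j rho (mxtens_index (i, a)) (mxtens_index (j, b)) * D j i.

(* w ⊗ 1_n, written entrywise since 'M_(d * n, 1 * n) is not convertible to
   'M_(d * n, n). *)
Definition tens1mx n d (w : 'cV[C]_d) : 'M[C]_(d * n, n) :=
  \matrix_(p, b) (w (mxtens_unindex p).1 0 * ((mxtens_unindex p).2 == b)%:R).

Lemma ptrace_mul_sum d n K (lam : 'I_K -> C) (Ds : 'I_K -> 'M[C]_d)
    (rho : 'M[C]_(d * n)) :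
  ptrace_mul (\sum_k lam k *: Ds k) rho = \sum_k lam k *: ptrace_mul (Ds k) rho.
Proof.
apply/matrixP => a b; rewrite summxE !mxE.
under eq_bigr => i _ do under eq_bigr => j _ do rewrite summxE mulr_sumr.
under eq_bigr => i _ do rewrite exchange_big.
rewrite exchange_big; apply: eq_bigr => k _; rewrite !mxE mulr_sumr.
apply: eq_bigr => i _; rewrite mulr_sumr; apply: eq_bigr => j _.
by rewrite !mxE mulrCA.
Qed.

Lemma ptrace_mul_rank1 d n (w : 'cV[C]_d) (rho : 'M[C]_(d * n)) :
  ptrace_mul (w *m w^t*) rho = (tens1mx n w)^t* *m rho *m tens1mx n w.
Proof.
apply/matrixP => a b; rewrite !mxE sum_mxtens_index.
under [RHS]eq_bigr => j _ do under eq_bigr => b' _ do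
  rewrite mxE sum_mxtens_index [tens1mx _ _ _ _]mxE mxtens_indexK /=.
under [RHS]eq_bigr => j _ do under eq_bigr => b' _ do under eq_bigr => i _ do
  under eq_bigr => a' _ do rewrite !mxE mxtens_indexK /= rmorphM /= conjC_nat mulrAC.
under [RHS]eq_bigr => j _ do under eq_bigr => b' _ do under eq_bigr => i _ do
  rewrite sum_mul_delta.
under [RHS]eq_bigr => j _ do under eq_bigr => b' _ do rewrite mulrA.
under [RHS]eq_bigr => j _ do rewrite sum_mul_delta.
under [RHS]eq_bigr => j _ do rewrite mulr_suml.
rewrite [RHS]exchange_big; apply: eq_bigr => i _; apply: eq_bigr => j _.
by rewrite !mxE big_ord1 !mxE [LHS]mulrC [w j _ * _]mulrC mulrAC.
Qed.

Lemma mxtrace_ptrace_mul1 d n (rho : 'M[C]_(d * n)) : \tr (ptrace_mul 1%:M rho) = \tr rho.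
Proof.
rewrite /mxtrace [RHS]sum_mxtens_index [RHS]exchange_big; apply: eq_bigr => a _.
rewrite mxE; apply: eq_bigr => i _.
by under eq_bigr => j _ do rewrite mxE; rewrite sum_mul_delta.
Qed.

Lemma ptrace_mul_hermsym d n (D : 'M[C]_d) (rho : 'M[C]_(d * n)) :
  D \is hermsymmx -> rho \is hermsymmx -> ptrace_mul D rho \is hermsymmx.
Proof.
move=> /hermsymmxP hD /hermsymmxP hrho; apply/hermsymmxP => a b.
rewrite !mxE rmorph_sum exchange_big; apply: eq_bigr => i _.
rewrite rmorph_sum; apply: eq_bigr => j _.
by rewrite rmorphM /= -hrho -hD.
Qed.

Lemma ptrace_mul_product d n (D : 'M[C]_d) (w : 'cV[C]_d) (X : 'M[C]_n) :
  ptrace_mul D (tens1mx n w *m X *m (tens1mx n w)^t*) = (w^t* *m D *m w) 0 0 *: X.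
Proof.
have VXV i j a b : (tens1mx n w *m X *m (tens1mx n w)^t*) (mxtens_index (i, a))
    (mxtens_index (j, b)) = w i 0 * X a b * (w j 0)^*.
  rewrite mxE; under eq_bigr => q _ do rewrite !mxE mxtens_indexK /= rmorphM /= conjC_nat.
  under eq_bigr => q _ do under eq_bigr => r _ do
    rewrite !mxE mxtens_indexK /= mulrAC eq_sym.
  under eq_bigr => q _ do rewrite sum_mul_delta mulrA eq_sym.
  by rewrite sum_mul_delta mulrAC.
apply/matrixP => a b; rewrite !mxE mulr_suml.
under eq_bigr => i _ do under eq_bigr => j _ do rewrite VXV.
apply: eq_bigr => i _; rewrite mxE !mulr_suml; apply: eq_bigr => j _.
by rewrite !mxE; ring.
Qed.

Lemma adj_diag_mul_sum n (P : 'M[C]_n) (lam : 'rV[C]_n) :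
  P^t* *m diag_mx lam *m P = \sum_k lam 0 k *: (col k (P^t*) *m (col k (P^t*))^t*).
Proof.
apply/matrixP => i j; rewrite summxE mul_mx_diag mxE; apply: eq_bigr => k _.
by rewrite !mxE big_ord1 !mxE conjCK mulrCA mulrA.
Qed.

Lemma trnorm_ptrace_mul_le d n (D P : 'M[C]_d) (lam : 'rV[C]_d) (m : C)
    (rho : 'M[C]_(d * n)) :
  D \is hermsymmx -> P \is unitarymx -> D = P^t* *m diag_mx lam *m P ->
  (forall k, `|lam 0 k| <= m) -> density rho -> trnorm (ptrace_mul D rho) <= m.
Proof.
move=> hD hP eqD lam_le [psd_rho tr_rho].
pose Xs k := (tens1mx n (col k (P^t*)))^t* *m rho *m tens1mx n (col k (P^t*)).
have eqX : ptrace_mul D rho = \sum_k lam 0 k *: Xs k.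
  rewrite eqD adj_diag_mul_sum ptrace_mul_sum.
  by under eq_bigr do rewrite ptrace_mul_rank1.
have sum_tr : \sum_k \tr (Xs k) = 1.
  rewrite -tr_rho -mxtrace_ptrace_mul1.
  have -> : (1%:M : 'M[C]_d) = P^t* *m diag_mx (const_mx 1) *m P.
    by rewrite diag_const_mx mulmx1 mulmx1C //; apply/unitarymxP.
  rewrite adj_diag_mul_sum ptrace_mul_sum raddf_sum.
  by apply: eq_bigr => k _; rewrite mxE scale1r ptrace_mul_rank1.
have psdXs k : psd (Xs k) by apply: psd_adj_conj.
have normalX : ptrace_mul D rho \is normalmx.
  by apply/hermitian_normalmx/ptrace_mul_hermsym/psd_hermsym.
apply: le_trans (trnorm_le_psd_comb normalX eqX psdXs) _.
rewrite -[m]mulr1 -sum_tr mulr_sumr; apply: ler_sum => k _.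
by rewrite ler_wpM2r ?psd_mxtrace_ge0.
Qed.

Lemma trnorm_ptrace_mul_attained d (D P : 'M[C]_d) (lam : 'rV[C]_d) k :
  P \is unitarymx -> D = P^t* *m diag_mx lam *m P ->
  exists rho : 'M[C]_(d * 1), density rho /\ trnorm (ptrace_mul D rho) = `|lam 0 k|.
Proof.
move=> hP eqD; have PPt : P *m P^t* = 1%:M by apply/unitarymxP.
pose w := col k (P^t*).
have quad_w A : (w^t* *m A *m w) 0 0 = (P *m A *m P^t*) k k.
  by rewrite /w colE adjmxM trmxCK -[RHS]quad_form_delta !mulmxA; reflexivity.
pose V := tens1mx 1 w.
have rhoE : V *m V^t* = V *m 1%:M *m V^t* by rewrite mulmx1.
exists (V *m V^t*); split; first split.
- exact: psd_rank1.
- rewrite -mxtrace_ptrace_mul1 rhoE ptrace_mul_product quad_w mulmx1 PPt.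
  by rewrite mxE eqxx mulr1n scale1r mxtrace1.
rewrite rhoE ptrace_mul_product quad_w eqD !mulmxA PPt mul1mx -mulmxA PPt mulmx1.
by rewrite trnorm_mx11 !mxE eqxx !mulr1n mulr1.
Qed.

(** * Two-outcome measurement channels *)

Definition pauliZ : 'M[C]_2 := diag_mx (\row_(i < 2) (-1) ^+ i).

Lemma pauliZ_delta : pauliZ = delta_mx 0 0 - delta_mx 1 1.
Proof.
by rewrite /pauliZ diag_mx_sum_delta big_ord2 !mxE expr0 expr1 scale1r scaleN1r.
Qed.

Lemma pauliZ_hermsym : pauliZ \is hermsymmx.
Proof.
apply/hermsymmxP => i j; rewrite !mxE eq_sym.
by case: eqP => [->|_]; rewrite ?mulr0n ?conjC0 // !mulr1n rmorphXn /= rmorphN1.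
Qed.

Lemma trnorm_pauliZ : trnorm pauliZ = 2.
Proof. by rewrite trnorm_diag big_ord2 !mxE expr0 expr1 normrN normr1. Qed.

Lemma is_diamond_normP d k (S : 'M[C]_d -> 'M[C]_k) t :
  is_diamond_norm S t -> forall t', is_diamond_norm S t' <-> t' = t.
Proof.
move=> [le_t [n [rho [rho_dens eq_t]]]] t'.
split=> [[le_t' [n' [rho' [rho'_dens eq_t']]]] | ->]; last by split=> //; exists n, rho.
by apply/le_anti; rewrite -{1}eq_t' -{2}eq_t le_t ?le_t'.
Qed.

Section TwoOutcome.
Variables (d : nat) (M N : 'I_2 -> 'M[C]_d).
Hypotheses (povmM : POVM M) (povmN : POVM N).
Let Delta := map_diff (meas_channel M) (meas_channel N).
Let D := M 0 - N 0.

Lemma povm2_diff_hermsym : D \is hermsymmx.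
Proof.
have /hermsymmxP hM := psd_hermsym (povmM.1 0).
have /hermsymmxP hN := psd_hermsym (povmN.1 0).
by apply/hermsymmxP => i j; rewrite !mxE hM hN rmorphB.
Qed.

Lemma meas_diff2E rho : Delta rho = \tr (rho *m D) *: pauliZ.
Proof.
have DN : M 1 - N 1 = - D.
  have L1 (L : 'I_2 -> 'M[C]_d) : \sum_k L k = 1%:M -> L 1 = 1%:M - L 0.
    by rewrite big_ord2 => <-; rewrite addrC addKr.
  by rewrite (L1 M povmM.2) (L1 N povmN.2) /D opprB addrC addrA subrK opprB.
rewrite /Delta /map_diff /meas_channel -sumrB big_ord2 /= -!scalerBl.
rewrite -!(raddfB (@mxtrace C d)) -!mulmxBr DN.
by rewrite pauliZ_delta mulmxN raddfN scalerBr scaleNr.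
Qed.

Lemma meas_diff2_delta i j : Delta (delta_mx i j) = D j i *: pauliZ.
Proof. by rewrite meas_diff2E mxtrace_delta_mul. Qed.

Lemma ext_apply_meas_diff2 n (rho : 'M[C]_(d * n)) :
  ext_apply Delta rho = pauliZ *t ptrace_mul D rho.
Proof.
apply/matrixP => p q.
case: (mxtens_indexP p) => k a; case: (mxtens_indexP q) => l b.
rewrite tensmxE !mxE summxE mulr_sumr; apply: eq_bigr => i _.
rewrite summxE mulr_sumr; apply: eq_bigr => j _.
rewrite -[RHS](sum_mul_delta2
  (fun a' b' => _ * (rho (mxtens_index (i, a')) (mxtens_index (j, b')) * _)) a b).
rewrite summxE; apply: eq_bigr => a' _; rewrite summxE; apply: eq_bigr => b' _.
by rewrite meas_diff2_delta mxE tensmxE !mxE; ring.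
Qed.

Lemma choi_meas_diff2 : choi Delta = pauliZ *t D^T.
Proof.
apply/matrixP => p q.
case: (mxtens_indexP p) => k a; case: (mxtens_indexP q) => l b.
rewrite tensmxE [D^T a b]mxE -(sum_mul_delta2 (fun i j => pauliZ k l * D j i) a b) summxE.
apply: eq_bigr => i _; rewrite summxE; apply: eq_bigr => j _.
by rewrite meas_diff2_delta tensmxE !mxE; ring.
Qed.

Lemma diamond_norm_meas_diff2 (P : 'M[C]_d) (lam : 'rV[C]_d) k :
  P \is unitarymx -> D = P^t* *m diag_mx lam *m P ->
  (forall j, `|lam 0 j| <= `|lam 0 k|) -> is_diamond_norm Delta (2 * `|lam 0 k|).
Proof.
move=> hP eqD lam_le.
have trnorm_ext n (rho : 'M[C]_(d * n)) : density rho ->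
    trnorm (ext_apply Delta rho) = 2 * trnorm (ptrace_mul D rho).
  move=> [psd_rho _]; rewrite ext_apply_meas_diff2 trnorm_tens ?trnorm_pauliZ //.
  - exact/hermitian_normalmx/pauliZ_hermsym.
  - exact/hermitian_normalmx/(ptrace_mul_hermsym povm2_diff_hermsym)/psd_hermsym.
split=> [n rho rho_dens | ].
  rewrite trnorm_ext // ler_wpM2l ?ler0n //.
  exact: trnorm_ptrace_mul_le povm2_diff_hermsym hP eqD lam_le rho_dens.
have [rho [rho_dens trnorm_rho]] := trnorm_ptrace_mul_attained k hP eqD.
by exists 1%N, rho; rewrite trnorm_ext // trnorm_rho.
Qed.

Lemma ME_norm_meas_diff2 : (0 < d)%N -> d%:R * ME_norm Delta = 2 * trnorm D.
Proof.
move=> d_gt0; have normalD := hermitian_normalmx povm2_diff_hermsym.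
have normalJ : pauliZ *t D^T \is normalmx.
  exact/hermitian_normalmx/tens_hermsym/trmx_hermsym/povm2_diff_hermsym/pauliZ_hermsym.
rewrite /ME_norm choi_meas_diff2 trnormZ // trnorm_tens ?trnorm_pauliZ ?trnorm_tr //.
  rewrite ger0_norm ?invr_ge0 ?ler0n // mulrA mulfV ?mul1r //.
  by rewrite pnatr_eq0 -lt0n.
- exact/hermitian_normalmx/pauliZ_hermsym.
- exact/hermitian_normalmx/trmx_hermsym/povm2_diff_hermsym.
Qed.

End TwoOutcome.

End MeasurementChannels.

Theorem corollary2 (C : numClosedFieldType) (M N : 'I_2 -> 'M[C]_2) :
  POVM M -> POVM N -> M 1 != N 1 ->
  (MEWC M N <-> \det (M 0 - N 0) = 0).
Proof.
move=> povmM povmN _.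
have /normal_unitary_diag[P [lam [hP eqD]]] :=
  hermitian_normalmx (povm2_diff_hermsym povmM povmN).
have [k lam_le] := ord2_max_norm (fun j => lam 0 j).
have diam := diamond_norm_meas_diff2 povmM povmN hP eqD lam_le.
have PtP : P^t* *m P = 1%:M by apply: mulmx1C; apply/unitarymxP.
rewrite /MEWC /= ME_norm_meas_diff2 // (is_diamond_normP diam) eqD.
rewrite trnorm_unitary_diag // !det_mulmx mulrAC -det_mulmx PtP det1 mul1r det_diag.
rewrite !big_ord2 /= -ord2_norm_sum_eq_max //.
have two_neq0 : (2 : C) != 0 by rewrite pnatr_eq0.
by split=> [/(mulfI two_neq0) | ->].
Qed.
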